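(* Let $\mathcal{I}$ be an interval hypergraph on $[n]$ closed under intersection, and let $A,B$ be acyclic orientations of $\mathcal{I}$. The following are equivalent: (a) $A\le B$ in $P_{\mathcal{I}}$; (b) $A(I)\le B(I)$ for all $I\in\mathcal{I}$; (c) $\sigma_A\le\tau_B$ in the weak order; (d) for all $i<j$ in $[n]$, $j\prec_A i$ implies $i\not\prec_B j$.
   Context: An interval hypergraph $\mathcal{I}$ on $[n]$ is a collection of intervals of $[n]$ containing all singletons; it is closed under intersection if $I,J\in\mathcal{I}$, $I\cap J\ne\varnothing$ imply $I\cap J\in\mathcal{I}$. An orientation is a map $O:\mathcal{I}\to[n]$ with $O(I)\in I$; it is acyclic if there are no $H_1,\dots,H_k$, $k\ge2$, with $O(H_{i+1})\in H_i\setminus\{O(H_i)\}$ for $i\in[k-1]$ and $O(H_1)\in H_k\setminus\{O(H_k)\}$. Orientations $O\ne O'$ are related by an increasing flip (from $O$ to $O'$) if there exist $1\le i<j\le n$ such that for all $H$: if $O(H)\ne O'(H)$ then $O(H)=i$, $O'(H)=j$; and if $\{i,j\}\subseteq H$ then $O(H)=i\iff O'(H)=j$. $P_{\mathcal{I}}$ is the transitive closure of the increasing flip relation on acyclic orientations. For a permutation $\pi$, $\mathrm{Or}_\pi(I)=\pi(\min\{j:\pi(j)\in I\})$; for each acyclic orientation $A$ the fiber $\{\pi:\mathrm{Or}_\pi=A\}$ is an interval of the weak order, denoted $[\sigma_A,\tau_A]$. The partial order $\prec_A$ on $[n]$ is the transitive closure of $A(I)\prec_A h$ for $I\in\mathcal{I}$,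 $h\in I\setminus\{A(I)\}$. *)

(* Ground set [n] = {1..n} is modelled by 'I_n = {0..n-1}
   (order-preserving relabelling). *)
From mathcomp Require Import all_boot fingroup perm.
Set Implicit Arguments. Unset Strict Implicit. Unset Printing Implicit Defensive.

Section Defs.
Variable n : nat.
Implicit Types (I J : {set 'I_n}) (Hg : {set {set 'I_n}}) (O : {set 'I_n} -> 'I_n).

Definition is_interval I : bool :=
  (I != set0) &&
  [forall i : 'I_n, forall j : 'I_n, forall k : 'I_n,
     [&& i \in I, k \in I, (i <= j)%N & (j <= k)%N] ==> (j \in I)].

Definition interval_hypergraph Hg : Prop :=
  (forall I, I \in Hg -> is_interval I) /\ (forall i : 'I_n, [set i] \in Hg).

Definition closed_under_intersection Hg : Prop :=
  forall I J, I \in Hg -> J \in Hg -> I :&: J != set0 -> I :&: J \in Hg.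

(* Orientation: O(I) \in I for every hyperedge (values outside Hg irrelevant). *)
Definition orientation Hg O : Prop := forall I, I \in Hg -> O I \in I.

Definition orient_eq Hg O O' : Prop := forall I, I \in Hg -> O I = O' I.

Definition cyc_rel O : rel {set 'I_n} := fun X Y => O Y \in X :\ O X.

(* Acyclic: no H_1..H_k (k >= 2) in Hg with O(H_{i+1}) \in H_i \ {O(H_i)}
   cyclically (path.cycle gives exactly these k conditions). *)
Definition acyclic Hg O : Prop :=
  forall s : seq {set 'I_n}, all (fun X => X \in Hg) s -> (1 < size s)%N ->
    ~~ path.cycle (cyc_rel O) s.

Definition incr_flip Hg O O' : Prop :=
  ~ orient_eq Hg O O' /\
  exists i j : 'I_n, (i < j)%N /\
    forall X, X \in Hg ->
      (O X <> O' X -> O X = i /\ O' X = j) /\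
      ([set i; j] \subset X -> (O X = i <-> O' X = j)).

Inductive PI_le Hg : ({set 'I_n} -> 'I_n) -> ({set 'I_n} -> 'I_n) -> Prop :=
| PI_refl O O' : orient_eq Hg O O' -> PI_le Hg O O'
| PI_step O C O' : incr_flip Hg O C -> acyclic Hg C -> PI_le Hg C O' ->
    PI_le Hg O O'.

Definition Or (pi : {perm 'I_n}) I : option 'I_n :=
  ohead [seq pi j | j <- enum 'I_n & pi j \in I].

Definition in_fiber Hg (pi : {perm 'I_n}) O : Prop :=
  forall I, I \in Hg -> Or pi I = Some (O I).

(* Inversion set (on values) and the weak order. *)
Definition inv_set (pi : {perm 'I_n}) : {set 'I_n * 'I_n} :=
  [set p : 'I_n * 'I_n | (p.1 < p.2)%N && ((pi^-1)%g p.2 < (pi^-1)%g p.1)%N].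

Definition weak_le (pi pi' : {perm 'I_n}) : bool := inv_set pi \subset inv_set pi'.

Definition fiber_min Hg O (s : {perm 'I_n}) : Prop :=
  in_fiber Hg s O /\ forall pi, in_fiber Hg pi O -> weak_le s pi.
Definition fiber_max Hg O (t : {perm 'I_n}) : Prop :=
  in_fiber Hg t O /\ forall pi, in_fiber Hg pi O -> weak_le pi t.

Definition prec_step Hg O : rel 'I_n :=
  fun x y => [exists X in Hg, (O X == x) && (y \in X :\ x)].
Definition prec Hg O (x y : 'I_n) : bool :=
  [exists z, prec_step Hg O x z && connect (prec_step Hg O) z y].

End Defs.

(* (a) -> (b): an increasing flip only raises values.
   (c) <-> (d): the fiber of an orientation O consists of the linear extensions of the
   relation O(I) < h (h in I), so sigma_A inverts exactly the pairs i < j with j <_A i,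
   and tau_B exactly those with not i <_B j.
   (c) -> (a): climb from sigma_A to tau_B in the weak order by adjacent transpositions;
   each one changes Or_pi by at most an increasing flip, and Or_pi is always acyclic.
   (b) -> (d): by acyclicity and closure under intersection, a <_O-chain from u to v
   with u < v can be replaced by one that only moves upwards in [n] (and similarly
   downwards). If j <_A i and i <_B j, the descending A-chain and the ascending B-chain
   cross inside edges X and Y with B(X :&: Y) < A(X :&: Y). *)

From mathcomp Require Import all_boot fingroup perm.
From mathcomp Require Import zify.
Set Implicit Arguments. Unset Strict Implicit. Unset Printing Implicit Defensive.

Lemma ohead_sorted_min (T : eqType) (leT : rel T) (s : seq T) m :
  transitive leT -> antisymmetric leT -> sorted leT s -> m \in s ->
  {in s, forall x, leT m x} -> ohead s = Some m.
Proof.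
case: s => // h t leT_tr leT_anti s_sorted; rewrite inE => /predU1P[-> //|mt] m_min.
congr Some; apply: leT_anti; rewrite m_min ?mem_head // andbT.
exact: (allP (order_path_min leT_tr s_sorted)) m mt.
Qed.

Lemma connect_leq (T : finType) (e : rel T) (f : T -> nat) :
  (forall x y, e x y -> f x < f y) -> forall u v, connect e u v -> f u <= f v.
Proof.
move=> f_incr u v /connectP[p]; elim: p u => [|w p IH] u /=; first by move=> _ ->.
by case/andP=> /f_incr uw /IH vw /vw; apply: leq_trans (ltnW uw).
Qed.

Lemma connect_cross (T : finType) (e : rel T) (f : T -> nat) u v c :
  connect e u v -> f u < c <= f v ->
  exists z z', [/\ connect e u z, e z z' & f z < c <= f z'].
Proof.
move=> /connectP[p]; elim: p u => [|w p IH] u /=; first by move=> _ ->; lia.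
case/andP=> uw wp v_last /andP[uc cv]; case: (leqP c (f w)) => [cw|wc].
  by exists u, w; rewrite connect0 uw uc cw.
have [|z [z' [wz zz' zc]]] := IH w wp v_last; first by rewrite wc cv.
by exists z, z'; split => //; apply: connect_trans (connect1 uw) wz.
Qed.

Lemma cycle_incr_nil (T : Type) (e : rel T) (f : T -> nat) s :
  (forall x y, e x y -> f x < f y) -> path.cycle e s -> s = [::].
Proof.
case: s => // x p f_incr /(sub_path (e' := relpre f ltn) f_incr).
rewrite -path_map map_rcons => /(order_path_min ltn_trans).
by rewrite all_rcons ltnn.
Qed.

Lemma exists_descent (f : nat -> nat) lo hi : lo <= hi -> f hi < f lo ->
  exists2 i, lo <= i < hi & f i.+1 < f i.
Proof.
elim: hi => [|hi IH]; first by rewrite leqn0 => /eqP->; rewrite ltnn.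
rewrite leq_eqVlt => /predU1P[-> |lo_hi]; first by rewrite ltnn.
case: (ltnP (f hi.+1) (f hi)) => [desc|asc] f_hi; first by exists hi => //; lia.
have [|i /andP[lo_i i_hi] desc] := IH lo_hi; first exact: leq_ltn_trans asc f_hi.
by exists i; rewrite // lo_i ltnW.
Qed.

Section Orientations.
Variable n : nat.
Implicit Types (a b x y z : 'I_n) (X Y : {set 'I_n}) (Hg : {set {set 'I_n}}).
Implicit Types (s t pi : {perm 'I_n}).

(* A permutation [pi] lists [pi 0, pi 1, ...], so the value [x] sits at position [pi^-1 x]. *)
Local Notation pos pi := ((pi^-1)%g : {perm 'I_n}).

Lemma pos_inj pi x y : (pos pi x : nat) = pos pi y -> x = y.
Proof. by move/val_inj/perm_inj. Qed.

Lemma Or_min pi X z : z \in X -> {in X, forall y, pos pi z <= pos pi y} ->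
  Or pi X = Some z.
Proof.
move=> zX z_min; rewrite /Or.
have enum_sorted : sorted (fun i j : 'I_n => i <= j) (enum 'I_n).
  by have := iota_sorted 0 n; rewrite -val_enum_ord sorted_map.
rewrite -(permKV pi z); set s := [seq j <- _ | _].
suff : ohead s = Some (pos pi z) by case: s => //= j _ [->].
apply: (@ohead_sorted_min _ (fun i j : 'I_n => i <= j)).
- by move=> i j k; apply: leq_trans.
- by move=> i j /andP[ij ji]; apply/val_inj/eqP; rewrite eqn_leq ij.
- by apply: sorted_filter enum_sorted => i j k; apply: leq_trans.
- by rewrite mem_filter permKV zX mem_enum.
- by move=> j; rewrite mem_filter => /andP[/z_min]; rewrite permK.
Qed.

Lemma Or_mem pi X z : Or pi X = Some z -> z \in X.
Proof.
rewrite /Or; case Or_seq: [seq _ | _ <- _ & _] => [|h t] //= [<-].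
have /mapP[j] : h \in [seq pi j | j <- enum 'I_n & pi j \in X] by rewrite Or_seq mem_head.
by rewrite mem_filter => /andP[jX _] ->.
Qed.

Lemma OrP pi X z :
  reflect (z \in X /\ {in X, forall y, pos pi z <= pos pi y}) (Or pi X == Some z).
Proof.
apply: (iffP eqP) => [Or_z|[]]; last exact: Or_min.
have zX := Or_mem Or_z.
have [m mX m_min] := arg_minnP (fun y => pos pi y : nat) zX.
by move: Or_z; rewrite (Or_min mX m_min) => -[<-].
Qed.

Definition linear_ext (r : rel 'I_n) pi := forall x y, r x y -> pos pi x < pos pi y.

Lemma linear_ext_connect (r : rel 'I_n) pi x y :
  linear_ext r pi -> connect r x y -> pos pi x <= pos pi y.
Proof. by move=> pi_r; apply: (connect_leq (f := fun z => pos pi z : nat)). Qed.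

Lemma in_fiberP Hg O pi : orientation Hg O ->
  in_fiber Hg pi O <-> linear_ext (prec_step Hg O) pi.
Proof.
move=> O_or; split=> [pi_O x y /existsP[X /and3P[XHg /eqP OX]]|pi_ext X XHg].
  rewrite in_setD1 => /andP[yx yX]; have /eqP/OrP[_ /(_ y yX)] := pi_O X XHg.
  by rewrite OX leq_eqVlt => /predU1P[/pos_inj yx'|//]; rewrite yx' eqxx in yx.
apply: Or_min => [|y yX]; first exact: O_or.
have [->//|yO] := eqVneq y (O X); apply/ltnW/pi_ext.
by apply/existsP; exists X; rewrite XHg eqxx in_setD1 yO.
Qed.

Lemma exists_perm_homo (key : 'I_n -> nat) : injective key ->
  exists q : {perm 'I_n}, forall u v, key u < key v -> q u < q v.
Proof.
move=> key_inj; pose rank z := #|[set w | key w < key z]|.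
have rank_lt z : rank z < n.
  rewrite -[n]card_ord -cardsT; apply/proper_card/properP; split; first exact: subsetT.
  by exists z; rewrite ?inE ?ltnn.
have rank_mono u v : key u < key v -> rank u < rank v.
  move=> uv; apply/proper_card/properP; split.
    by apply/subsetP => w; rewrite !inE => /ltn_trans; apply.
  by exists u; rewrite !inE ?ltnn.
have rank_inj : injective (fun z => Ordinal (rank_lt z)).
  move=> u v /(congr1 val) /= ruv; apply: key_inj.
  by case: (ltngtP (key u) (key v)) => // /rank_mono; rewrite ruv ltnn.
by exists (perm rank_inj) => u v /rank_mono; rewrite !permE.
Qed.

Lemma linear_ext_sep (r : rel 'I_n) pi x y : linear_ext r pi -> ~~ connect r y x ->
  exists2 q, linear_ext r q & pos q x < pos q y.
Proof.
move=> pi_ext yx; pose key z := connect r y z * n + pos pi z.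
have key_inj : injective key.
  move=> u v; rewrite /key => E; apply: (pos_inj (pi := pi)).
  by move: E (ltn_ord (pos pi u)) (ltn_ord (pos pi v)); do 2 case: (connect r y _); lia.
have [q q_key] := exists_perm_homo key_inj.
exists (q^-1)%g => [u v uv|]; rewrite invgK; apply: q_key; rewrite /key.
  have := pi_ext u v uv; have := ltn_ord (pos pi u).
  case yu: (connect r y u); first by rewrite (connect_trans yu (connect1 uv)); lia.
  by case: (connect r y v); lia.
by rewrite connect0 (negbTE yx); have := ltn_ord (pos pi x); lia.
Qed.

Lemma prec_connect Hg O x y : prec Hg O x y -> connect (prec_step Hg O) x y.
Proof. by case/existsP=> z /andP[/connect1 xz]; apply: connect_trans. Qed.

Lemma connect_prec Hg O x y :
  connect (prec_step Hg O) x y -> x != y -> prec Hg O x y.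
Proof.
case/connectP=> [[|z p] /= xp ->]; first by rewrite eqxx.
case/andP: xp => xz zp _; apply/existsP; exists z; rewrite xz.
by apply/connectP; exists p.
Qed.

Lemma linear_ext_prec Hg O pi x y :
  linear_ext (prec_step Hg O) pi -> prec Hg O x y -> pos pi x < pos pi y.
Proof.
move=> pi_ext /existsP[z /andP[/pi_ext xz zy]].
exact: leq_trans xz (linear_ext_connect pi_ext zy).
Qed.

Section Fibers.
Variables (Hg : {set {set 'I_n}}) (O : {set 'I_n} -> 'I_n).
Hypothesis O_or : orientation Hg O.

Lemma in_fiber_sep pi x y : in_fiber Hg pi O -> x != y -> ~~ prec Hg O y x ->
  exists2 q, in_fiber Hg q O & pos q x < pos q y.
Proof.
move=> /(in_fiberP _ O_or) pi_ext xy yx.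
have [|q q_ext xy_q] := linear_ext_sep pi_ext (x := x) (y := y).
  by apply: contra yx => /connect_prec; apply; rewrite eq_sym.
by exists q => //; apply/in_fiberP.
Qed.

Lemma inv_set_fiber_min s a b : fiber_min Hg O s -> a < b ->
  ((a, b) \in inv_set s) = prec Hg O b a.
Proof.
move=> [s_fib s_min] ab; rewrite inE /= ab.
apply/idP/idP => [ba|]; last exact/linear_ext_prec/in_fiberP.
apply: contraLR ba => not_ba; have [|q q_fib qab] := in_fiber_sep s_fib _ not_ba.
  by rewrite neq_ltn ab.
apply/negP => sba; have /subsetP/(_ (a, b)) := s_min q q_fib.
by rewrite !inE /= ab sba => /(_ isT); lia.
Qed.

Lemma inv_set_fiber_max t a b : fiber_max Hg O t -> a < b ->
  ((a, b) \in inv_set t) = ~~ prec Hg O a b.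
Proof.
move=> [t_fib t_max] ab; rewrite inE /= ab.
apply/idP/idP => [ba|not_ab].
  by apply: contraL ba => /(linear_ext_prec ((in_fiberP _ O_or).1 t_fib)); lia.
have [|q q_fib qba] := in_fiber_sep t_fib _ not_ab; first by rewrite neq_ltn ab orbT.
by have /subsetP/(_ (a, b)) := t_max q q_fib; rewrite !inE /= ab qba => /(_ isT).
Qed.

End Fibers.

Lemma weak_le_fiber_prec Hg A B s t : orientation Hg A -> orientation Hg B ->
  fiber_min Hg A s -> fiber_max Hg B t ->
  weak_le s t <-> forall i j : 'I_n, i < j -> prec Hg A j i -> ~~ prec Hg B i j.
Proof.
move=> A_or B_or s_min t_max; split=> [/subsetP st i j ij|prec_AB].
  by rewrite -(inv_set_fiber_min A_or s_min ij) -(inv_set_fiber_max B_or t_max ij); apply: st.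
apply/subsetP => -[i j] ij_inv; have ij : i < j by move: ij_inv; rewrite inE => /andP[].
move: ij_inv; rewrite (inv_set_fiber_min A_or s_min ij) (inv_set_fiber_max B_or t_max ij).
exact: prec_AB.
Qed.

(* [Or pi X] is [None] only for [X = set0], which is never a hyperedge; [d] fills that hole. *)
Definition perm_orient d pi X : 'I_n := odflt d (Or pi X).

Lemma perm_orient_eq d pi X z : z \in X -> {in X, forall y, pos pi z <= pos pi y} ->
  perm_orient d pi X = z.
Proof. by move=> zX z_min; rewrite /perm_orient (Or_min zX z_min). Qed.

Lemma perm_orient_min d pi X : X != set0 ->
  perm_orient d pi X \in X /\ {in X, forall y, pos pi (perm_orient d pi X) <= pos pi y}.
Proof.
case/set0Pn=> x xX; have [z zX z_min] := arg_minnP (fun y => pos pi y : nat) xX.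
by rewrite (perm_orient_eq d zX z_min).
Qed.

Lemma perm_orient_lt d pi X y : y \in X -> y != perm_orient d pi X ->
  pos pi (perm_orient d pi X) < pos pi y.
Proof.
move=> yX yO; have [|_ /(_ y yX)] := perm_orient_min d pi (X := X).
  by apply/set0Pn; exists y.
by rewrite leq_eqVlt => /predU1P[/pos_inj Oy|//]; rewrite Oy eqxx in yO.
Qed.

Lemma acyclic_perm_orient Hg d pi : acyclic Hg (perm_orient d pi).
Proof.
move=> s _ s_size; have incr X Y : cyc_rel (perm_orient d pi) X Y ->
    pos pi (perm_orient d pi X) < pos pi (perm_orient d pi Y).
  by case/setD1P=> YX /perm_orient_lt; apply.
by apply/negP => /(cycle_incr_nil incr) s_nil; rewrite s_nil in s_size.
Qed.

Lemma inv_set_pos_lt s t x y : inv_set s = inv_set t ->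
  pos s x < pos s y -> pos t x < pos t y.
Proof.
move=> st sxy; case: (ltngtP x y) => [xy|yx|/val_inj xy]; last by rewrite xy ltnn in sxy.
  have : (x, y) \notin inv_set t by rewrite -st inE /= xy; lia.
  rewrite inE /= xy /= -leqNgt leq_eqVlt => /predU1P[/pos_inj eq_xy|//].
  by rewrite eq_xy ltnn in xy.
have : (y, x) \in inv_set t by rewrite -st inE /= yx.
by rewrite inE /= => /andP[].
Qed.

Lemma perm_orient_inv_set d s t X : inv_set s = inv_set t ->
  perm_orient d s X = perm_orient d t X.
Proof.
move=> st; have [->|X0] := eqVneq X set0.
  have Or0 pi : Or pi set0 = None.
    by case Or_z: (Or pi set0) => [z|//]; have := Or_mem Or_z; rewrite inE.
  by rewrite /perm_orient !Or0.
have [zX z_min] := perm_orient_min d s X0; symmetry; apply: perm_orient_eq => // y yX.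
have [->//|yz] := eqVneq y (perm_orient d s X).
exact/ltnW/(inv_set_pos_lt st)/perm_orient_lt.
Qed.

(* Along the [s]-positions from [x] to [y] the [t]-positions must descend somewhere,
   and the pair found there is adjacent in [s] and inverted by [t] only. *)
Lemma weak_le_cover s t : weak_le s t -> ~~ weak_le t s ->
  exists a b, [/\ a < b, (pos s b : nat) = (pos s a).+1 & (a, b) \in inv_set t].
Proof.
move=> st /subsetPn[[x y] xy_t xy_s]; move: xy_t xy_s; rewrite !inE /= => /andP[xy tyx].
rewrite xy /= -leqNgt leq_eqVlt => /predU1P[/pos_inj eq_xy|sxy].
  by rewrite eq_xy ltnn in xy.
pose w i := s (insubd x i); pose f i := pos t (w i) : nat.
have pos_w i : i < n -> (pos s (w i) : nat) = i by move=> i_lt; rewrite permK val_insubd i_lt.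
have w_pos z : w (pos s z) = z by rewrite /w valKd permKV.
have [|i /andP[_ i_hi] desc] := exists_descent (f := f) (ltnW sxy).
  by rewrite /f !w_pos.
have i_lt : i.+1 < n by apply: leq_ltn_trans i_hi (ltn_ord _).
have [pos_wi pos_wi1] := (pos_w i (ltnW i_lt), pos_w i.+1 i_lt).
case: (ltngtP (w i) (w i.+1)) => [lt_w|gt_w|/val_inj eq_w].
- by exists (w i), (w i.+1); rewrite pos_wi pos_wi1 inE /= lt_w.
- have inv_s : (w i.+1, w i) \in inv_set s.
    by rewrite inE /= gt_w pos_wi pos_wi1 /=.
  by have := subsetP st _ inv_s; rewrite inE /= gt_w /= => /ltnW; rewrite leqNgt desc.
- by move: pos_wi1; rewrite -eq_w pos_wi; lia.
Qed.

Section AdjacentTransposition.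
Variables (s : {perm 'I_n}) (a b : 'I_n).
Hypothesis lt_ab : a < b.
Hypothesis adj_ab : (pos s b : nat) = (pos s a).+1.
Local Notation s' := (s * tperm a b)%g.

Lemma pos_swap y : pos s' y = pos s (tperm a b y).
Proof. by rewrite invMg permM tpermV. Qed.

Lemma inv_set_swap : inv_set s' = (a, b) |: inv_set s.
Proof.
have nat_ne (u v : 'I_n) : u <> v -> (u : nat) <> v /\ (pos s u : nat) <> pos s v.
  by move=> uv; split=> [/val_inj|/pos_inj].
apply/setP=> -[x y]; rewrite !inE /= !pos_swap xpair_eqE -!val_eqE /=.
case: (tpermP a b x) => [->|->|/nat_ne[? ?] /nat_ne[? ?]];
  case: (tpermP a b y) => [->|->|/nat_ne[? ?] /nat_ne[? ?]]; lia.
Qed.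

(* Only the order of [a] and [b] changes, so the first element of [X] can only move
   from [a] to [b]. *)
Lemma perm_orient_swap d X : X != set0 ->
  perm_orient d s' X = if (perm_orient d s X == a) && (b \in X) then b
                       else perm_orient d s X.
Proof.
move=> X0; have [zX z_min] := perm_orient_min d s X0.
have z_lt y : y \in X -> y <> perm_orient d s X -> pos s (perm_orient d s X) < pos s y.
  by move=> yX yz; apply: perm_orient_lt yX _; apply/eqP.
move: (perm_orient d s X) zX z_min z_lt => z zX z_min z_lt.
apply: perm_orient_eq => [|y yX]; first by case: ifP => [/andP[]|].
rewrite !pos_swap; have := z_min y yX.
have [za|za] := eqVneq z a; rewrite ?za /= in z_lt *.
  case bX: (b \in X) => /=; first by rewrite tpermR; case: tpermP => [->|->|_ _]; lia.
  rewrite tpermL; case: tpermP => [->|yb|ya _]; first lia.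
    by rewrite yb bX in yX.
  by have := z_lt y yX ya; lia.
have [zb|zb] := eqVneq z b.
  by rewrite zb tpermR; case: tpermP => [->|->|_ _]; lia.
rewrite tpermD 1?eq_sym //; case: tpermP => [->|yb|_ _ //]; first lia.
by rewrite yb in yX; have := z_lt b yX (nesym (elimN eqP zb)); lia.
Qed.

Lemma incr_flip_swap Hg d O : (forall X, X \in Hg -> X != set0) ->
  orient_eq Hg O (perm_orient d s) -> ~ orient_eq Hg O (perm_orient d s') ->
  incr_flip Hg O (perm_orient d s').
Proof.
move=> Hg0 O_s O_s'; split=> //; exists a, b; split=> // X XHg.
have [_ z_min] := perm_orient_min d s (Hg0 X XHg).
rewrite O_s // perm_orient_swap ?Hg0 //; split; first by case: ifP => [/andP[/eqP]|].
move=> /subsetP abX; have [aX bX] := (abX a (set21 a b), abX b (set22 a b)).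
rewrite bX andbT; case: eqVneq => [->|za] //; split=> [/eqP|zb].
  by rewrite (negbTE za).
by have := z_min a aX; rewrite zb adj_ab ltnn.
Qed.

End AdjacentTransposition.

Lemma PI_le_perm_orient Hg d O B s t : (forall X, X \in Hg -> X != set0) ->
  orient_eq Hg (perm_orient d t) B -> weak_le s t ->
  orient_eq Hg O (perm_orient d s) -> PI_le Hg O B.
Proof.
move=> Hg0 t_B; have [k] := ubnP #|inv_set t :\: inv_set s|.
elim: k => // k IH in s O * => k_lt st O_s.
have [ts|nts] := boolP (weak_le t s).
  apply: PI_refl => X XHg; rewrite O_s // -t_B // (perm_orient_inv_set d X (t := t)) //.
  by apply/eqP; rewrite eqEsubset; apply/andP.
have [a [b [ab adj abt]]] := weak_le_cover st nts.
set s' := (s * tperm a b)%g.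
have s't : weak_le s' t by rewrite /weak_le inv_set_swap // subUset sub1set abt.
have lt_card : #|inv_set t :\: inv_set s'| < #|inv_set t :\: inv_set s|.
  apply/proper_card/properP; rewrite inv_set_swap //.
  split; first by apply/setDS/subsetUr.
  by exists (a, b); move: abt; rewrite !inE /= ab adj => ->; rewrite ?eqxx ltnNge leqnSn.
have k_lt' : #|inv_set t :\: inv_set s'| < k by lia.
have [/forall_inP same|/forall_inPn[X XHg differ]] :=
  boolP [forall X in Hg, O X == perm_orient d s' X].
  by apply: IH k_lt' s't _ => X /same/eqP.
apply: (PI_step (C := perm_orient d s')); last exact: IH k_lt' s't _.
  by apply: incr_flip_swap => // O_s'; rewrite O_s' ?eqxx in differ.
exact: acyclic_perm_orient.
Qed.

Lemma orient_cap Hg O X Y : orientation Hg O -> acyclic Hg O ->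
  closed_under_intersection Hg -> X \in Hg -> Y \in Hg -> O X \in Y ->
  O (X :&: Y) = O X.
Proof.
move=> O_or O_acyc Hg_cap XHg YHg OXY; set Z := X :&: Y.
have OXZ : O X \in Z by rewrite inE O_or.
have ZHg : Z \in Hg by apply: Hg_cap => //; apply/set0Pn; exists (O X).
apply/eqP; apply: contraT => OZX; have := O_acyc [:: X; Z]; rewrite /= XHg ZHg.
move=> /(_ isT isT); rewrite /path.cycle /= /cyc_rel !in_setD1 OXZ.
by rewrite OZX (eq_sym (O X)) OZX (subsetP (subsetIl X Y)) // O_or.
Qed.

Section IncreasingPaths.
Variables (Hg : {set {set 'I_n}}) (O : {set 'I_n} -> 'I_n) (f : 'I_n -> nat).
Hypotheses (O_or : orientation Hg O) (O_acyc : acyclic Hg O).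
Hypothesis Hg_cap : closed_under_intersection Hg.
Hypothesis Hg_convex : forall {X : {set 'I_n}} {x y z : 'I_n}, X \in Hg ->
  x \in X -> z \in X -> f x <= f y <= f z -> y \in X.
Hypothesis f_inj : injective f.

Definition up_step : rel 'I_n := [rel x y | prec_step Hg O x y && (f x < f y)].

Lemma up_step_leq u v : connect up_step u v -> f u <= f v.
Proof. by apply: connect_leq => x y /andP[]. Qed.

Lemma up_path_cross u v c : connect up_step u v -> f u < c <= f v ->
  exists2 X, X \in Hg &
    [/\ f u <= f (O X), f (O X) < c & forall y, f (O X) <= f y <= c -> y \in X].
Proof.
move=> uv c_range; have [z [z' [uz /andP[zz' _] zc]]] := connect_cross uv c_range.
case/existsP: zz' => X /and3P[XHg /eqP OX /setD1P[_ z'X]].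
exists X; rewrite // OX; split=> [||y y_range]; first exact: up_step_leq uz.
  by case/andP: zc.
by apply: Hg_convex XHg (O_or XHg) z'X _; rewrite OX; lia.
Qed.

Lemma connect_up_step u v :
  connect (prec_step Hg O) u v -> f u < f v -> connect up_step u v.
Proof.
case/connectP=> p; elim: p u => [|w p IH] u /=; first by move=> _ ->; rewrite ltnn.
case/andP=> /[dup] uw /existsP[X /and3P[XHg /eqP OX /setD1P[wu wX]]] wp v_last uv.
have uX : u \in X by rewrite -OX O_or.
have [vw|wv] := leqP (f v) (f w).
  have vX : v \in X by apply: Hg_convex XHg uX wX _; rewrite vw ltnW.
  apply: connect1; rewrite /up_step /= uv andbT; apply/existsP; exists X.
  by rewrite XHg OX eqxx in_setD1 vX andbT; apply: contraTneq uv => ->; rewrite ltnn.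
have wv' := IH w wp v_last wv; case: (ltngtP (f u) (f w)) => [uw'|wu'|/f_inj wu_eq].
- by apply: connect_trans wv'; apply: connect1; rewrite /up_step /= uw.
- (* Turning back below [u] is impossible: the chain would recross level [f u] from some
     [O Z \in X] with [u \in Z], and [O (X :&: Z)] would be both [u] and [O Z]. *)
  have [|Z ZHg [wZ Zu uZ]] := up_path_cross wv' (c := f u); first by rewrite wu' ltnW.
  have OXZ : O X \in Z by rewrite OX; apply: uZ; rewrite leqnn andbT ltnW.
  have OZX : O Z \in X by apply: Hg_convex XHg wX uX _; rewrite wZ ltnW.
  have := orient_cap O_or O_acyc Hg_cap ZHg XHg OZX.
  rewrite setIC (orient_cap O_or O_acyc Hg_cap XHg ZHg OXZ) OX => uOZ.
  by rewrite -uOZ ltnn in Zu.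
- by rewrite wu_eq eqxx in wu.
Qed.

End IncreasingPaths.

Lemma is_interval_convex X x y z :
  is_interval X -> x \in X -> z \in X -> x <= y <= z -> y \in X.
Proof.
case/andP=> _ /forallP/(_ x)/forallP/(_ y)/forallP/(_ z)/implyP X_conv xX zX /andP[xy yz].
by apply: X_conv; rewrite xX zX xy yz.
Qed.

(* The A-chain descending from [j] to [i] leaves some [x = A X] with [i \in X] and
   [i < x <= j]; the B-chain ascending from [i] to [j] jumps over [x] from some [y = B Y]
   with [x \in Y] and [i <= y]; then [A (X :&: Y) = x > y = B (X :&: Y)]. *)
Lemma orient_le_prec Hg A B :
  interval_hypergraph Hg -> closed_under_intersection Hg ->
  orientation Hg A -> acyclic Hg A -> orientation Hg B -> acyclic Hg B ->
  (forall I, I \in Hg -> A I <= B I) ->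
  forall i j : 'I_n, i < j -> prec Hg A j i -> ~~ prec Hg B i j.
Proof.
move=> [Hg_int _] Hg_cap A_or A_acyc B_or B_acyc AB i j ij /prec_connect ji.
apply/negP => /prec_connect ij'.
have val_convex X x y z : X \in Hg -> x \in X -> z \in X -> x <= y <= z -> y \in X.
  by move=> /Hg_int; apply: is_interval_convex.
have rev_convex X x y z :
    X \in Hg -> x \in X -> z \in X -> n - x <= n - y <= n - z -> y \in X.
  move=> XHg xX zX y_range; apply: (val_convex X z y x) XHg zX xX _.
  by move: y_range (ltn_ord x) (ltn_ord y) (ltn_ord z); lia.
have rev_inj : injective (fun x : 'I_n => n - x).
  by move=> x y xy; apply: ord_inj; move: xy (ltn_ord x) (ltn_ord y); lia.
have ji_rev : n - j < n - i by move: ij (ltn_ord j); lia.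
have [|X XHg [jA Ai iX]] := up_path_cross A_or rev_convex (c := n - i)
  (connect_up_step A_or A_acyc Hg_cap rev_convex rev_inj ji ji_rev).
  by rewrite ji_rev leqnn.
have {}iX : i \in X by apply: iX; rewrite leqnn andbT ltnW.
have [|Y YHg [iB BA AY]] := up_path_cross B_or val_convex (c := A X)
  (connect_up_step B_or B_acyc Hg_cap val_convex (@ord_inj n) ij' ij).
  by move: jA Ai (ltn_ord j) (ltn_ord (A X)); lia.
have {}AY : A X \in Y by apply: AY; rewrite leqnn andbT ltnW.
have BX : B Y \in X.
  by apply: (val_convex X i (B Y) (A X)) XHg iX (A_or _ XHg) _; rewrite iB ltnW.
have XYHg : X :&: Y \in Hg.
  by apply: Hg_cap => //; apply/set0Pn; exists (A X); rewrite inE A_or.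
have := AB _ XYHg; rewrite (orient_cap A_or A_acyc Hg_cap XHg YHg AY).
by rewrite setIC (orient_cap B_or B_acyc Hg_cap YHg XHg BX) leqNgt BA.
Qed.

Lemma PI_le_orient_le Hg O O' : PI_le Hg O O' -> forall I, I \in Hg -> O I <= O' I.
Proof.
elim=> [{}O {}O' OO' I IHg|{}O C {}O' [_ [i [j [ij flip]]]] _ _ CO' I IHg].
  by rewrite OO'.
apply: leq_trans (CO' I IHg); have [+ _] := flip I IHg.
by case: (eqVneq (O I) (C I)) => [-> //|/eqP OC /(_ OC)[-> ->]]; apply: ltnW.
Qed.

End Orientations.

Theorem theorem4p9 (n : nat) (Hg : {set {set 'I_n}})
  (A B : {set 'I_n} -> 'I_n) (sigmaA tauB : {perm 'I_n}) :
  interval_hypergraph Hg -> closed_under_intersection Hg ->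
  orientation Hg A -> acyclic Hg A ->
  orientation Hg B -> acyclic Hg B ->
  fiber_min Hg A sigmaA -> fiber_max Hg B tauB ->
  [<-> PI_le Hg A B;
       forall I, I \in Hg -> (A I <= B I)%N;
       weak_le sigmaA tauB;
       forall i j : 'I_n, (i < j)%N -> prec Hg A j i -> ~~ prec Hg B i j].
Proof.
move=> Hg_int Hg_cap A_or A_acyc B_or B_acyc sigma_min tau_max.
have Hg0 X : X \in Hg -> X != set0 by move=> /(proj1 Hg_int)/andP[].
have weak_le_prec := weak_le_fiber_prec A_or B_or sigma_min tau_max.
pose d := A set0.
have A_sigma : orient_eq Hg A (perm_orient d sigmaA).
  by move=> X XHg; rewrite /perm_orient (proj1 sigma_min X XHg).
have tau_B : orient_eq Hg (perm_orient d tauB) B.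
  by move=> X XHg; rewrite /perm_orient (proj1 tau_max X XHg).
tfae=> [/PI_le_orient_le //|AB|/weak_le_prec //|/weak_le_prec st].
- by apply/weak_le_prec; apply: orient_le_prec.
- exact: PI_le_perm_orient Hg0 tau_B st A_sigma.
Qed.
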